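(* Let $N\ge 2$ and $\beta\in\{2,4\}$. (Complex case, $\beta=2$.) Let $R=[\rho_{jk}]$ range over $N\times N$ complex correlation matrices (Hermitian positive definite with all diagonal entries equal to $1$), with Cholesky factorisation $R=LL^*$, $L=[l_{jk}]$ lower triangular with $l_{jj}>0$. Parametrise $L$ by angles $\theta_{jp}\in(0,\pi)$, $2\le j\le N$, $1\le p\le 2j-2$, via $$l_{jk}=\left(\cos\theta_{j,2k-1}+i\cos\theta_{j,2k}\sin\theta_{j,2k-1}\right)\prod_{p=1}^{2k-2}\sin\theta_{jp}\ \ (1\le k\le j-1),\qquad l_{jj}=\prod_{p=1}^{2j-2}\sin\theta_{jp},$$ and $l_{11}=1$. Then the absolute value of the Jacobian determinant of the map from the angles $\{\theta_{jp}\}$ to the real coordinates $\{\mathrm{Re}\,\rho_{jk},\mathrm{Im}\,\rho_{jk}\}_{1\le k<j\le N}$ is $$\prod_{j=2}^{N}\prod_{p=1}^{2j-2}\left(\sin\theta_{jp}\right)^{2N-p-1}.$$ (Quaternion case, $\beta=4$.) Let $R$ range over $N\times N$ quaternion correlation matrices: $2N\times 2N$ complex Hermitian positive definite matrices composed of $2\times2$ blocks of the form $\begin{bmatrix}z&w\\-\bar w&\bar z\end{bmatrix}$, with all diagonal blocks equal to the $2\times 2$ identity. Write $R=LL^*$ with $L$ block lower triangular of the same block form, whose diagonal blocks are positive multiples $l_{jj}I_2$ of the identity. For an off-diagonal block $l_{jk}$ with parameters $(z,w)$ write $l_{jk}^{(1)}=\mathrm{Re}\,z$, $l_{jk}^{(2)}=\mathrm{Im}\,z$,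 $l_{jk}^{(3)}=\mathrm{Re}\,w$, $l_{jk}^{(4)}=\mathrm{Im}\,w$. Parametrise by angles $\theta_{jp}\in(0,\pi)$, $2\le j\le N$, $1\le p\le 4j-4$, via $$l_{jk}^{(s)}=\cos\theta_{j,4(k-1)+s}\left(\prod_{m=1}^{s-1}\sin\theta_{j,4(k-1)+m}\right)\prod_{p=1}^{4(k-1)}\sin\theta_{jp}\ \ (1\le k\le j-1,\ 1\le s\le 4),\qquad l_{jj}=\prod_{p=1}^{4(j-1)}\sin\theta_{jp},$$ and $l_{11}=1$. Then the absolute value of the Jacobian determinant of the map from the angles $\{\theta_{jp}\}$ to the four real coordinates of each block $\rho_{jk}$, $1\le k<j\le N$, of $R$ is $$\prod_{j=2}^{N}\prod_{p=1}^{4j-4}\left(\sin\theta_{jp}\right)^{4N-p-3}.$$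
   Context: Empty products equal $1$. $L^*$ denotes the conjugate transpose. The hyperspherical parametrisations above are bijections from the open cube of angles onto the set of possible Cholesky factors of correlation matrices (each row of $L$ being a unit vector of real coordinates with positive last coordinate $l_{jj}$). *)

From HB Require Import structures.
From mathcomp Require Import all_boot all_order all_algebra.
From mathcomp Require Import all_classical all_reals.
From mathcomp Require Import topology normedtype derive trigo.
From mathcomp Require Import complex.

Set Implicit Arguments.
Unset Strict Implicit.
Unset Printing Implicit Defensive.
Import Order.TTheory GRing.Theory Num.Theory numFieldNormedType.Exports.
Local Open Scope ring_scope.

Section Defs.
Variable R : realType.

(* Angles are given as a family theta : nat -> nat -> R, theta j p = θ_{jp}
   (paper's 1-based indices); only the values with 2 <= j <= N and
   1 <= p <= d(j-1) (d = β = 2 or 4) are used. *)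
Definition angles := nat -> nat -> R.

Definition angle_idx (d N : nat) : seq (nat * nat) :=
  flatten [seq [seq (j, p) | p <- iota 1 (d * (j - 1))] | j <- iota 2 (N - 1)].

Definition upd (th : angles) (j p : nat) (t : R) : angles :=
  fun j' p' => if (j' == j) && (p' == p) then t else th j' p'.

Definition pderiv (G : angles -> R) (th : angles) (j p : nat) : R :=
  derive1 (fun t => G (upd th j p t)) (th j p).

(* Jacobian matrix of the map F (whose output coordinates are labelled by the
   same index set idx as the input angles) ; row a = output coordinate
   labelled nth a, column b = derivative w.r.t. θ labelled nth b. *)
Definition angle_jacobian (idx : seq (nat * nat)) (F : angles -> nat -> nat -> R)
    (th : angles) : 'M[R]_(size idx) :=
  \matrix_(a, b) pderiv (fun th' => F th' (nth (0,0)%N idx a).1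
                                         (nth (0,0)%N idx a).2)
                        th (nth (0,0)%N idx b).1 (nth (0,0)%N idx b).2.

Definition lC (th : angles) (j k : nat) : R[i] :=
  if (k < j)%N then
    Complex (cos (th j (2 * k - 1)%N))
            (cos (th j (2 * k)%N) * sin (th j (2 * k - 1)%N)) *
    (\prod_(1 <= p < (2 * k - 2).+1) sin (th j p))%:C%C
  else if k == j then (\prod_(1 <= p < (2 * j - 2).+1) sin (th j p))%:C%C
  else 0.

Definition LC (N : nat) (th : angles) : 'M[R[i]]_N :=
  \matrix_(a, b) lC th a.+1 b.+1.

Definition RC (N : nat) (th : angles) : 'M[R[i]]_N :=
  LC N th *m (map_mx (@conjc R) (LC N th))^T.

(* entry (i,j) (0-based nat indices) of a matrix, 0 if out of range *)
Definition mx_at (T : pzRingType) (m n : nat) (A : 'M[T]_(m, n)) (i j : nat) : T :=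
  match insub i, insub j with
  | Some i', Some j' => A i' j'
  | _, _ => 0
  end.

Definition rhoC (N : nat) (th : angles) (j k : nat) : R[i] :=
  mx_at (RC N th) j.-1 k.-1.

(* output coordinate labelled (j,p), p = 2(k-1)+s : s=1 Re ρ_{jk}, s=2 Im ρ_{jk} *)
Definition coordC (N : nat) (th : angles) (j p : nat) : R :=
  let k := ((p - 1) %/ 2).+1 in
  if ((p - 1) %% 2 == 0)%N then complex.Re (rhoC N th j k) else complex.Im (rhoC N th j k).

Definition lQ (th : angles) (j k s : nat) : R :=
  cos (th j (4 * (k - 1) + s)%N) *
  (\prod_(1 <= m < s) sin (th j (4 * (k - 1) + m)%N)) *
  \prod_(1 <= p < (4 * (k - 1)).+1) sin (th j p).

Definition lQdiag (th : angles) (j : nat) : R :=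
  \prod_(1 <= p < (4 * (j - 1)).+1) sin (th j p).

Definition qblock (z w : R[i]) (a b : nat) : R[i] :=
  match a, b with
  | 0, 0 => z
  | 0, _ => w
  | _, 0 => - conjc w
  | _, _ => conjc z
  end%N.

Definition LQblock (th : angles) (j k : nat) (a b : nat) : R[i] :=
  if (k < j)%N then
    qblock (Complex (lQ th j k 1) (lQ th j k 2))
           (Complex (lQ th j k 3) (lQ th j k 4)) a b
  else if k == j then qblock (lQdiag th j)%:C%C 0 a b
  else 0.

(* the 2N x 2N complex matrix L; row index r is in block r/2 + 1, position r%2 *)
Definition LQ (N : nat) (th : angles) : 'M[R[i]]_(2 * N) :=
  \matrix_(r, c) LQblock th (r %/ 2).+1 (c %/ 2).+1 (r %% 2) (c %% 2).

Definition RQ (N : nat) (th : angles) : 'M[R[i]]_(2 * N) :=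
  LQ N th *m (map_mx (@conjc R) (LQ N th))^T.

Definition rhoQz (N : nat) (th : angles) (j k : nat) : R[i] :=
  mx_at (RQ N th) (2 * (j - 1)) (2 * (k - 1)).
Definition rhoQw (N : nat) (th : angles) (j k : nat) : R[i] :=
  mx_at (RQ N th) (2 * (j - 1)) (2 * (k - 1)).+1.

(* output coordinate labelled (j,p), p = 4(k-1)+s :
   s=1 Re z, s=2 Im z, s=3 Re w, s=4 Im w of the block rho_{jk} *)
Definition coordQ (N : nat) (th : angles) (j p : nat) : R :=
  let k := ((p - 1) %/ 4).+1 in
  match ((p - 1) %% 4)%N with
  | 0 => complex.Re (rhoQz N th j k)
  | 1 => complex.Im (rhoQz N th j k)
  | 2 => complex.Re (rhoQw N th j k)
  | _ => complex.Im (rhoQw N th j k)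
  end%N.

End Defs.

From HB Require Import structures.
From mathcomp Require Import all_boot all_order all_algebra.
From mathcomp Require Import all_classical all_reals.
From mathcomp Require Import topology normedtype derive trigo.
From mathcomp Require Import complex.
From mathcomp Require Import zify.

(** Order the angles θ_{jp} lexicographically and write p = β(k-1) + s with
    1 <= s <= β.  The coordinate of ρ labelled (j,p) is the s-th real coordinate of
      Σ_{m<k} l_{jm} l_{km}^*  +  l_{jk} l_{kk},
    where the sum involves only row k < j and the first β(k-1) angles of row j, and
    l^{(s)}_{jk} = cos θ_{jp} Π_{q<p} sin θ_{jq}.  So every coordinate depends only
    on the angles up to θ_{jp}: the Jacobian is triangular, with diagonal entries
    -l_{kk} Π_{q<=p} sin θ_{jq}.  Counting the occurrences of each sin θ_{jp} in the
    product of these entries gives the exponent βN - p - (β-1). *)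

Set Implicit Arguments.
Unset Strict Implicit.
Unset Printing Implicit Defensive.
Import Order.TTheory GRing.Theory Num.Theory numFieldNormedType.Exports.
Local Open Scope ring_scope.

Section NatProducts.
Variable R : comNzRingType.

Lemma prod_nat_cumulative (a : nat -> R) n :
  \prod_(1 <= p < n.+1) \prod_(1 <= q < p.+1) a q =
  \prod_(1 <= q < n.+1) a q ^+ (n.+1 - q).
Proof.
elim: n => [|n IH]; first by rewrite !big_geq.
rewrite big_nat_recr //= IH [in RHS]big_nat_recr //= subSnn expr1.
rewrite [in X in _ * X]big_nat_recr //= mulrA; congr (_ * _).
rewrite -big_split /=; apply: eq_big_nat => q /andP[_ hq].
by rewrite (subSn (ltnW hq)) exprS mulrC.
Qed.

Lemma prod_nat_strict_cumulative (b : nat -> R) n :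
  \prod_(1 <= j < n.+1) \prod_(1 <= k < j) b k = \prod_(1 <= k < n.+1) b k ^+ (n - k).
Proof.
elim: n => [|n IH]; first by rewrite !big_geq.
rewrite big_nat_recr //= IH [in RHS]big_nat_recr //= subnn expr0 mulr1.
rewrite -big_split /=; apply: eq_big_nat => q /andP[_ hq].
by rewrite (subSn (hq : (q <= n)%N)) exprS mulrC.
Qed.

Lemma prod_nat_blocks (f : nat -> R) d n : (0 < d)%N ->
  \prod_(1 <= p < (d * n).+1) f ((p - 1) %/ d).+1 = \prod_(1 <= k < n.+1) f k ^+ d.
Proof.
move=> d_gt0; rewrite big_add1 /=.
elim: n => [|n IH]; first by rewrite muln0 !big_geq.
rewrite (big_cat_nat _ (n := d * n)) /=; [|lia|lia].
rewrite IH [in RHS]big_nat_recr //=; congr (_ * _).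
rewrite (eq_big_nat _ _ (F2 := fun=> f n.+1)).
  by rewrite prodr_const_nat; congr (_ ^+ _); lia.
move=> p /andP[hp1 hp2]; congr (f _.+1).
have -> : (p.+1 - 1 = n * d + (p - d * n))%N by lia.
by rewrite divnMDl // divn_small ?addn0 //; lia.
Qed.

Lemma angle_exponentE d N j p : (0 < d)%N -> (0 < j <= N)%N -> (p <= d * (j - 1))%N ->
  (d * N - p - (d - 1) = (d * (j - 1)).+1 - p + d * (N - j))%N.
Proof.
move=> d_gt0 /andP[j_gt0 hjN] hp.
have hdj : (d * j <= d * N)%N by rewrite leq_mul2l hjN orbT.
have hd : (d <= d * j)%N by rewrite leq_pmulr.
by rewrite !mulnBr !muln1 in hp *; lia.
Qed.

Lemma prod_angle_exponents (a : nat -> nat -> R) d N : (0 < d)%N ->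
  \prod_(2 <= j < N.+1) \prod_(1 <= p < (d * (j - 1)).+1)
     (\prod_(1 <= q < (d * ((p - 1) %/ d)).+1) a ((p - 1) %/ d).+1 q *
      \prod_(1 <= q < p.+1) a j q)
  = \prod_(2 <= j < N.+1) \prod_(1 <= p < (d * (j - 1)).+1) a j p ^+ (d * N - p - (d - 1)).
Proof.
move=> d_gt0.
(* a j p occurs once for each p' >= p in row j, and d times in each row j' > j *)
pose S k := \prod_(1 <= q < (d * k.-1).+1) a k q.
pose T j := \prod_(1 <= q < (d * (j - 1)).+1) a j q ^+ ((d * (j - 1)).+1 - q).
transitivity (\prod_(2 <= j < N.+1) ((\prod_(1 <= k < j) S k ^+ d) * T j)).
  apply: eq_big_nat => j /andP[hj _].
  rewrite big_split /= prod_nat_cumulative (prod_nat_blocks S) //.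
  by rewrite /T subn1 (prednK (ltnW hj)).
transitivity (\prod_(2 <= j < N.+1) (S j ^+ (d * (N - j)) * T j)); last first.
  apply: eq_big_nat => j /andP[hj hjN].
  rewrite /S /T -prodrXl -subn1 -big_split /=; apply: eq_big_nat => p /andP[_ hp].
  by rewrite -exprD addnC -angle_exponentE //; lia.
rewrite !big_split /=; congr (_ * _).
case: N => [|N]; first by rewrite !big_geq.
have S1 : S 1%N = 1 by rewrite /S muln0 big_geq.
have -> : \prod_(2 <= j < N.+2) \prod_(1 <= k < j) S k ^+ d =
          \prod_(1 <= j < N.+2) \prod_(1 <= k < j) S k ^+ d.
  by rewrite [in RHS]big_ltn // [in RHS]big_geq // mul1r.
rewrite prod_nat_strict_cumulative big_ltn // S1 expr1n expr1n mul1r.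
by apply: eq_bigr => k _; rewrite exprM.
Qed.

End NatProducts.

Lemma mem_angle_idx d N j p :
  ((j, p) \in angle_idx d N) = (2 <= j <= N)%N && (1 <= p <= d * (j - 1))%N.
Proof.
apply/flatten_mapP/andP.
  case=> j0; rewrite mem_iota => hj0 /mapP [p0]; rewrite mem_iota => hp [-> ->].
  split; lia.
case=> hj hp; exists j; first by rewrite mem_iota; lia.
by apply/mapP; exists p; first by rewrite mem_iota; lia.
Qed.

Definition angle_lt : rel (nat * nat) :=
  fun x y => (x.1 < y.1)%N || (x.1 == y.1) && (x.2 < y.2)%N.

Lemma pairwise_angle_lt d N : pairwise angle_lt (angle_idx d N).
Proof.
rewrite /angle_idx; elim: (N - 1)%N 2%N => [//|n IH] a /=.
rewrite pairwise_cat IH andbT; apply/andP; split.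
  apply/allrelP => x y /mapP[p _ ->] /flatten_mapP[j hj /mapP[q _ ->]].
  by move: hj; rewrite mem_iota /angle_lt /= => hj; apply/orP; left; lia.
rewrite pairwise_map; apply: (sub_pairwise (r := ltn)).
  by move=> p q /= hpq; rewrite /angle_lt /= eqxx hpq orbT.
by rewrite -sorted_pairwise ?iota_ltn_sorted //; apply: ltn_trans.
Qed.

Lemma angle_block_bounds d j p : (0 < d)%N -> (1 <= p <= d * (j - 1))%N ->
  ((p - 1) %/ d < j - 1)%N /\ (d * ((p - 1) %/ d) < p)%N.
Proof.
move=> d_gt0 hp; split; first by rewrite ltn_divLR // mulnC; lia.
by rewrite mulnC (leq_ltn_trans (leq_divM _ _)) //; lia.
Qed.

Lemma pred_divn_eq d p : (0 < p)%N -> p = (d * ((p - 1) %/ d) + ((p - 1) %% d).+1)%N.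
Proof. by move=> p_gt0; rewrite mulnC addnS -divn_eq subn1 prednK. Qed.

Section Angles.
Variable R : realType.
Implicit Types th : angles R.

Definition sin_prod th (j n : nat) : R := \prod_(1 <= q < n.+1) sin (th j q).

Definition sph_coord th (j q : nat) : R :=
  cos (th j q) * \prod_(1 <= q' < q) sin (th j q').

Lemma upd_other th j' p' t j q : (j != j') || (q != p') -> upd th j' p' t j q = th j q.
Proof. by rewrite /upd; case/orP => /negbTE ->; rewrite ?andbF. Qed.

Lemma upd_before th j' p' t j q : (j != j') || (q < p')%N -> upd th j' p' t j q = th j q.
Proof. by move=> h; apply: upd_other; case/orP: h => [->//|/ltn_eqF ->]; rewrite orbT. Qed.

Lemma sin_prod_upd th j' p' t k n : (k != j') || (n < p')%N ->
  sin_prod (upd th j' p' t) k n = sin_prod th k n.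
Proof.
move=> h; apply: eq_big_nat => q /andP[_ hq]; rewrite upd_before //.
by case/orP: h => [->//|h]; rewrite (leq_ltn_trans _ h) ?orbT.
Qed.

Lemma sph_coord_upd th j' p' t j q : (j != j') || (q < p')%N ->
  sph_coord (upd th j' p' t) j q = sph_coord th j q.
Proof.
move=> h; rewrite /sph_coord upd_before //; congr (_ * _).
apply: eq_big_nat => q' /andP[_ hq]; rewrite upd_before //.
by case/orP: h => [->//|h]; rewrite (ltn_trans hq h) orbT.
Qed.

Lemma sph_coord_upd_self th j p t :
  sph_coord (upd th j p t) j p = cos t * \prod_(1 <= q < p) sin (th j q).
Proof.
rewrite /sph_coord /upd !eqxx; congr (_ * _).
by apply: eq_big_nat => q /andP[_ hq]; rewrite (ltn_eqF hq) andbF.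
Qed.

Lemma sin_prod_ge0 th j n : (forall q, (1 <= q <= n)%N -> 0 < th j q < pi) ->
  0 <= sin_prod th j n.
Proof.
move=> hth; rewrite /sin_prod big_nat_cond prodr_ge0 // => q /andP[/andP[hq1 hq2] _].
exact/ltW/sin_gt0_pi/hth/andP.
Qed.

Lemma derive1_add_mulcos (c K x : R) : derive1 (fun t => c + K * cos t) x = - (K * sin x).
Proof.
have h : is_derive x 1 (fun t => c + K * cos t) (0 + K *: (- sin x)).
  exact: is_deriveD.
by rewrite derive1E derive_val add0r /GRing.scale /= mulrN.
Qed.

Lemma det_angle_jacobian_trig d N (F : angles R -> nat -> nat -> R) th :
  (forall j p j' p' t, (j, p) \in angle_idx d N -> (j', p') \in angle_idx d N ->
     angle_lt (j, p) (j', p') -> F (upd th j' p' t) j p = F th j p) ->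
  \det (angle_jacobian (angle_idx d N) F th) =
  \prod_(x <- angle_idx d N) pderiv (fun th' => F th' x.1 x.2) th x.1 x.2.
Proof.
move=> F_later; rewrite det_trig; last first.
  apply/forallP => a; apply/forallP => b; apply/implyP => hab; rewrite mxE /pderiv.
  have := pairwiseP (0, 0)%N (pairwise_angle_lt d N) _ _ (ltn_ord a) (ltn_ord b) hab.
  have := mem_nth (0, 0)%N (ltn_ord a); have := mem_nth (0, 0)%N (ltn_ord b).
  case: nth => j' p'; case: nth => j p /= hb ha hlt.
  under eq_fun do rewrite F_later //.
  by rewrite derive1_cst.
by rewrite (big_nth (0, 0)%N) big_mkord; apply: eq_bigr => i _; rewrite mxE.
Qed.

End Angles.

Section SphericalJacobian.
Variables (R : realType) (d N : nat) (F G : angles R -> nat -> nat -> R).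
Hypothesis d_gt0 : (0 < d)%N.

Hypothesis F_split : forall th j p, (j, p) \in angle_idx d N ->
  F th j p = G th j p +
             sin_prod th ((p - 1) %/ d).+1 (d * ((p - 1) %/ d)) * sph_coord th j p.

Hypothesis G_upd : forall th j p j' p' t, (j, p) \in angle_idx d N ->
  j' != ((p - 1) %/ d).+1 -> (j' != j) || (d * ((p - 1) %/ d) < p')%N ->
  G (upd th j' p' t) j p = G th j p.

Variable th : angles R.
Hypothesis th_range : forall j p, (j, p) \in angle_idx d N -> 0 < th j p < pi.

Lemma F_upd_later j p j' p' t : (j, p) \in angle_idx d N -> (j', p') \in angle_idx d N ->
  angle_lt (j, p) (j', p') -> F (upd th j' p' t) j p = F th j p.
Proof.
move=> hjp hjp'; move: (hjp) (hjp'); rewrite !mem_angle_idx => /andP[hj hp] /andP[hj' hp'].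
have [hk hq] := angle_block_bounds d_gt0 hp.
rewrite /angle_lt /= => hlt.
by rewrite !F_split // G_upd ?sin_prod_upd ?sph_coord_upd //; lia.
Qed.

Lemma pderiv_F_diag j p : (j, p) \in angle_idx d N ->
  `|pderiv (fun th' => F th' j p) th j p| =
  sin_prod th ((p - 1) %/ d).+1 (d * ((p - 1) %/ d)) * sin_prod th j p.
Proof.
move=> hjp; move: (hjp); rewrite mem_angle_idx => /andP[hj hp].
have [hk hq] := angle_block_bounds d_gt0 hp.
set k := ((p - 1) %/ d).+1; set S := sin_prod th k _.
set P := \prod_(1 <= q < p) sin (th j q).
rewrite /pderiv.
have -> : (fun t => F (upd th j p t) j p) = fun t => G th j p + (S * P) * cos t.
  apply: funext => t.
  rewrite F_split // G_upd ?sin_prod_upd ?sph_coord_upd_self; try lia.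
  by rewrite [cos t * _]mulrC mulrA.
rewrite derive1_add_mulcos normrN.
have -> : S * P * sin (th j p) = S * sin_prod th j p.
  by rewrite /sin_prod big_nat_recr ?mulrA //; lia.
rewrite ger0_norm // mulr_ge0 // sin_prod_ge0 // => q hq'.
  by apply: th_range; rewrite mem_angle_idx; lia.
by apply: th_range; rewrite mem_angle_idx; lia.
Qed.

Theorem det_angle_jacobian_sph :
  `|\det (angle_jacobian (angle_idx d N) F th)| =
  \prod_(2 <= j < N.+1) \prod_(1 <= p < (d * (j - 1)).+1)
     sin (th j p) ^+ (d * N - p - (d - 1)).
Proof.
rewrite det_angle_jacobian_trig; last exact: F_upd_later.
rewrite normr_prod -(prod_angle_exponents (fun j q => sin (th j q))) //.
rewrite /angle_idx big_flatten /= big_map -[iota 2 _]/(index_iota 2 N.+1).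
apply: eq_big_nat => j hj.
have -> : iota 1 (d * (j - 1)) = index_iota 1 (d * (j - 1)).+1.
  by rewrite /index_iota subSS subn0.
rewrite big_map; apply: eq_big_nat => p hp.
by rewrite pderiv_F_diag // mem_angle_idx /=; lia.
Qed.

End SphericalJacobian.

Lemma mx_atE (T : pzRingType) m n (A : 'M[T]_(m, n)) i j (hi : (i < m)%N) (hj : (j < n)%N) :
  mx_at A i j = A (Ordinal hi) (Ordinal hj).
Proof.
rewrite /mx_at; case: insubP => [i' _ ei|]; last by rewrite hi.
case: insubP => [j' _ ej|]; last by rewrite hj.
by congr (A _ _); apply: val_inj.
Qed.

Section ComplexCase.
Variable R : realType.
Implicit Types th : angles R.
Local Open Scope complex_scope.

Lemma complex_mulr_real (a b s : R) : (a +i* b) * s%:C = (a * s) +i* (b * s).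
Proof. by rewrite -[_ * _]/((a * s - b * 0) +i* (a * 0 + b * s)) !mulr0 subr0 add0r. Qed.

Lemma ReD (x y : R[i]) : complex.Re (x + y) = complex.Re x + complex.Re y.
Proof. by case: x; case: y. Qed.

Lemma ImD (x y : R[i]) : complex.Im (x + y) = complex.Im x + complex.Im y.
Proof. by case: x; case: y. Qed.

Lemma eq_lC th1 th2 j m : (forall q, (q <= 2 * m)%N -> th1 j q = th2 j q) ->
  lC th1 j m = lC th2 j m.
Proof.
move=> eq_th; have eq_prod n : (n <= 2 * m)%N ->
    \prod_(1 <= p < n.+1) sin (th1 j p) = \prod_(1 <= p < n.+1) sin (th2 j p).
  by move=> hn; apply: eq_big_nat => q hq; rewrite eq_th //; lia.
rewrite /lC; case: ifP => [_|_]; first by rewrite !eq_th ?eq_prod //; lia.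
by case: ifP => // /eqP hmj; rewrite eq_prod //; lia.
Qed.

Lemma lC_upper th k m : (k < m)%N -> lC th k m = 0.
Proof. by move=> hkm; rewrite /lC ltnNge (ltnW hkm) /= gtn_eqF. Qed.

Lemma lC_diag th k : lC th k.+1 k.+1 = (sin_prod th k.+1 (2 * k))%:C.
Proof. by rewrite /lC ltnn eqxx (_ : 2 * k.+1 - 2 = 2 * k)%N //; lia. Qed.

Lemma lC_lower th j m : (m.+1 < j)%N ->
  lC th j m.+1 = sph_coord th j (2 * m).+1 +i* sph_coord th j (2 * m).+2.
Proof.
move=> hmj; rewrite /lC hmj (_ : 2 * m.+1 = (2 * m).+2)%N; last lia.
rewrite subn1 subn2 /= complex_mulr_real /sph_coord; congr (_ +i* _).
by rewrite [in RHS]big_nat_recr //= -mulrA [sin _ * _]mulrC.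
Qed.

Definition lC_dot th j k n : R[i] := \sum_(0 <= m < n) lC th j m.+1 * conjc (lC th k m.+1).

Lemma rhoCE N th j k : (0 < j <= N)%N -> (0 < k <= N)%N -> rhoC N th j k = lC_dot th j k N.
Proof.
move=> hj hk; have hj' : (j.-1 < N)%N by lia.
have hk' : (k.-1 < N)%N by lia.
rewrite /rhoC (mx_atE _ hj' hk') !mxE /lC_dot big_mkord.
by apply: eq_bigr => m _; rewrite !mxE /= !prednK //; lia.
Qed.

Lemma lC_dot_split th j k n : (k < n)%N ->
  lC_dot th j k.+1 n = lC_dot th j k.+1 k + lC th j k.+1 * (sin_prod th k.+1 (2 * k))%:C.
Proof.
move=> hkn; rewrite /lC_dot (big_cat_nat _ (n := k.+1)) //= big_nat_recr //=.
rewrite lC_diag conjc_real [X in _ + X]big_nat_cond [X in _ + X]big1 ?addr0 //.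
move=> m /andP[/andP[hkm _] _].
by rewrite (@lC_upper th k.+1 m.+1 hkm) conjc0 mulr0.
Qed.

Lemma lC_dot_upd th j k j' p' t : j' != k.+1 -> (j' != j) || (2 * k < p')%N ->
  lC_dot (upd th j' p' t) j k.+1 k = lC_dot th j k.+1 k.
Proof.
move=> hj'k hj'j; apply: eq_big_nat => m /andP[_ hm].
by rewrite (@eq_lC _ th j) ?(@eq_lC _ th k.+1) // => q hq; apply: upd_before; lia.
Qed.

Definition coordC_head th j p : R :=
  let k := ((p - 1) %/ 2)%N in
  if ((p - 1) %% 2 == 0)%N then complex.Re (lC_dot th j k.+1 k)
  else complex.Im (lC_dot th j k.+1 k).

Lemma coordC_split N th j p : (j, p) \in angle_idx 2 N ->
  coordC N th j p = coordC_head th j p +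
    sin_prod th ((p - 1) %/ 2).+1 (2 * ((p - 1) %/ 2)) * sph_coord th j p.
Proof.
rewrite mem_angle_idx => /andP[hj hp].
have [hk _] := angle_block_bounds (isT : (0 < 2)%N) hp.
have p_gt0 : (0 < p)%N by case/andP: hp.
rewrite /coordC /coordC_head /=.
move: hk (pred_divn_eq 2 p_gt0) (ltn_pmod (p - 1) (isT : (0 < 2)%N)).
move: ((p - 1) %/ 2)%N ((p - 1) %% 2)%N => k r hk -> hr.
rewrite rhoCE; [|lia..].
rewrite lC_dot_split; last lia.
rewrite lC_lower ?complex_mulr_real; last lia.
by case: r hr => [|[|//]] _; rewrite /= ?ReD ?ImD /= mulrC ?addn1 ?addn2.
Qed.

Lemma det_jacobian_coordC N th :
  (forall j p, (2 <= j <= N)%N -> (1 <= p <= 2 * (j - 1))%N -> 0 < th j p < pi) ->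
  `|\det (angle_jacobian (angle_idx 2 N) (coordC N) th)| =
  \prod_(2 <= j < N.+1) \prod_(1 <= p < (2 * j - 2).+1) sin (th j p) ^+ (2 * N - p - 1).
Proof.
move=> th_range; rewrite (det_angle_jacobian_sph (G := @coordC_head)) //.
- by apply: eq_big_nat => j hj; rewrite (_ : 2 * j - 2 = 2 * (j - 1))%N //; lia.
- exact: coordC_split.
- by move=> th' j p j' p' t _ hj'k hj'j; rewrite /coordC_head lC_dot_upd.
- by move=> j p; rewrite mem_angle_idx => /andP[]; exact: th_range.
Qed.

End ComplexCase.

Lemma sum_nat_pairs (V : nmodType) n (f : nat -> V) :
  \sum_(0 <= c < 2 * n) f c = \sum_(0 <= m < n) (f (2 * m)%N + f (2 * m).+1).
Proof.
elim: n => [|n IH]; first by rewrite !big_geq.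
by rewrite mulnS add2n !big_nat_recr //= IH addrA.
Qed.

Section QuaternionCase.
Variable R : realType.
Implicit Types th : angles R.

Definition lQz th j m : R[i] := LQblock th j m 0 0.
Definition lQw th j m : R[i] := LQblock th j m 0 1.

Lemma LQblock_10 th k m : LQblock th k m 1 0 = - conjc (lQw th k m).
Proof.
by rewrite /lQw /LQblock; case: ifP => _ //; case: ifP => _ //; rewrite conjc0 oppr0.
Qed.

Lemma LQblock_11 th k m : LQblock th k m 1 1 = conjc (lQz th k m).
Proof.
by rewrite /lQz /LQblock; case: ifP => _ //; case: ifP => _ //; rewrite conjc0.
Qed.

Lemma RQ_entry N th r c : (r < 2 * N)%N -> (c < 2 * N)%N ->
  mx_at (RQ N th) r c =
  \sum_(0 <= m < N)
    (LQblock th (r %/ 2).+1 m.+1 (r %% 2) 0 * conjc (LQblock th (c %/ 2).+1 m.+1 (c %% 2) 0) +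
     LQblock th (r %/ 2).+1 m.+1 (r %% 2) 1 * conjc (LQblock th (c %/ 2).+1 m.+1 (c %% 2) 1)).
Proof.
move=> hr hc; rewrite (mx_atE _ hr hc) /RQ !mxE.
under eq_bigr do rewrite !mxE.
rewrite -(big_mkord xpredT (fun i => LQblock th (r %/ 2).+1 (i %/ 2).+1 (r %% 2) (i %% 2) *
   conjc (LQblock th (c %/ 2).+1 (i %/ 2).+1 (c %% 2) (i %% 2)))).
rewrite sum_nat_pairs; apply: eq_big_nat => m _.
by rewrite !divn2 !modn2 mul2n /= uphalf_double doubleK odd_double.
Qed.

Lemma lQz_upper th k m : (k < m)%N -> lQz th k m = 0.
Proof. by move=> hkm; rewrite /lQz /LQblock ltnNge (ltnW hkm) /= gtn_eqF. Qed.

Lemma lQw_upper th k m : (k < m)%N -> lQw th k m = 0.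
Proof. by move=> hkm; rewrite /lQw /LQblock ltnNge (ltnW hkm) /= gtn_eqF. Qed.

Lemma lQz_diag th k : lQz th k.+1 k.+1 = (sin_prod th k.+1 (4 * k))%:C%C.
Proof. by rewrite /lQz /LQblock ltnn eqxx /= /lQdiag subn1. Qed.

Lemma lQw_diag th k : lQw th k.+1 k.+1 = 0.
Proof. by rewrite /lQw /LQblock ltnn eqxx. Qed.

Lemma lQ_sph th j m s : (0 < s)%N -> lQ th j m.+1 s = sph_coord th j (4 * m + s).
Proof.
move=> s_gt0; rewrite /lQ /sph_coord subn1 /= -mulrA; congr (_ * _).
rewrite [in RHS](big_cat_nat _ (n := (4 * m).+1)) /=; [|lia|lia].
rewrite [in RHS]mulrC; congr (_ * _).
rewrite -(add1n (4 * m)) big_addn (_ : 4 * m + s - 4 * m = s)%N; last lia.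
by apply: eq_big_nat => i _; rewrite addnC.
Qed.

Lemma lQz_lower th j m : (m.+1 < j)%N ->
  lQz th j m.+1 = (sph_coord th j (4 * m + 1) +i* sph_coord th j (4 * m + 2))%C.
Proof. by move=> hmj; rewrite /lQz /LQblock hmj /= !lQ_sph. Qed.

Lemma lQw_lower th j m : (m.+1 < j)%N ->
  lQw th j m.+1 = (sph_coord th j (4 * m + 3) +i* sph_coord th j (4 * m + 4))%C.
Proof. by move=> hmj; rewrite /lQw /LQblock hmj /= !lQ_sph. Qed.

Lemma eq_LQblock th1 th2 j m a b : (0 < m)%N ->
  (forall q, (q <= 4 * m)%N -> th1 j q = th2 j q) ->
  LQblock th1 j m a b = LQblock th2 j m a b.
Proof.
move=> m_gt0 eq_th; have eq_lQ s : (s <= 4)%N -> lQ th1 j m s = lQ th2 j m s.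
  move=> hs; rewrite /lQ eq_th; last lia.
  by congr (_ * _ * _); apply: eq_big_nat => q hq; rewrite eq_th //; lia.
rewrite /LQblock; case: ifP => _; first by rewrite !eq_lQ.
case: ifP => // /eqP hmj; rewrite /lQdiag (eq_big_nat _ _ (F2 := fun q => sin (th2 j q))) //.
by move=> q hq; rewrite eq_th //; lia.
Qed.

Lemma LQblock_upd th j m a b j' p' t : (0 < m)%N -> (j != j') || (4 * m < p')%N ->
  LQblock (upd th j' p' t) j m a b = LQblock th j m a b.
Proof.
by move=> m_gt0 hj'; apply: eq_LQblock => // q hq; apply: upd_before; lia.
Qed.

(* z- and w-parameters of the partial row products Σ_{m<n} l_{jm} l_{km}^*,
   computed from the block form [[z, w], [-w^*, z^*]] *)
Definition lQ_dotz th j k n : R[i] :=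
  \sum_(0 <= m < n) (lQz th j m.+1 * conjc (lQz th k m.+1) + lQw th j m.+1 * conjc (lQw th k m.+1)).

Definition lQ_dotw th j k n : R[i] :=
  \sum_(0 <= m < n) (lQw th j m.+1 * lQz th k m.+1 - lQz th j m.+1 * lQw th k m.+1).

Lemma rhoQzE N th j k : (0 < j <= N)%N -> (0 < k <= N)%N -> rhoQz N th j k = lQ_dotz th j k N.
Proof.
move=> hj hk; rewrite /rhoQz RQ_entry; [|lia..].
rewrite !divn2 !modn2 !mul2n /= !doubleK !odd_double !subn1 !prednK //; lia.
Qed.

Lemma rhoQwE N th j k : (0 < j <= N)%N -> (0 < k <= N)%N -> rhoQw N th j k = lQ_dotw th j k N.
Proof.
move=> hj hk; rewrite /rhoQw RQ_entry; [|lia..].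
rewrite !divn2 !modn2 !mul2n /= doubleK uphalf_double !odd_double !subn1 !prednK; [|lia..].
apply: eq_bigr => m _.
by rewrite LQblock_10 LQblock_11 rmorphN /= !conjcK mulrN addrC.
Qed.

Lemma lQ_dotz_split th j k n : (k < n)%N ->
  lQ_dotz th j k.+1 n = lQ_dotz th j k.+1 k + lQz th j k.+1 * (sin_prod th k.+1 (4 * k))%:C%C.
Proof.
move=> hkn; rewrite /lQ_dotz (big_cat_nat _ (n := k.+1)) //= big_nat_recr //=.
rewrite lQz_diag lQw_diag conjc_real conjc0 mulr0 addr0.
rewrite [X in _ + X]big_nat_cond [X in _ + X]big1 ?addr0 //.
move=> m /andP[/andP[hkm _] _].
by rewrite (@lQz_upper th k.+1 m.+1 hkm) (@lQw_upper th k.+1 m.+1 hkm) conjc0 !mulr0 addr0.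
Qed.

Lemma lQ_dotw_split th j k n : (k < n)%N ->
  lQ_dotw th j k.+1 n = lQ_dotw th j k.+1 k + lQw th j k.+1 * (sin_prod th k.+1 (4 * k))%:C%C.
Proof.
move=> hkn; rewrite /lQ_dotw (big_cat_nat _ (n := k.+1)) //= big_nat_recr //=.
rewrite lQz_diag lQw_diag mulr0 subr0.
rewrite [X in _ + X]big_nat_cond [X in _ + X]big1 ?addr0 //.
move=> m /andP[/andP[hkm _] _].
by rewrite (@lQz_upper th k.+1 m.+1 hkm) (@lQw_upper th k.+1 m.+1 hkm) !mulr0 subr0.
Qed.

Lemma lQ_dotz_upd th j k j' p' t : j' != k.+1 -> (j' != j) || (4 * k < p')%N ->
  lQ_dotz (upd th j' p' t) j k.+1 k = lQ_dotz th j k.+1 k.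
Proof.
move=> hj'k hj'j; apply: eq_big_nat => m /andP[_ hm].
by rewrite /lQz /lQw !(@LQblock_upd th j m.+1) ?(@LQblock_upd th k.+1 m.+1) //; lia.
Qed.

Lemma lQ_dotw_upd th j k j' p' t : j' != k.+1 -> (j' != j) || (4 * k < p')%N ->
  lQ_dotw (upd th j' p' t) j k.+1 k = lQ_dotw th j k.+1 k.
Proof.
move=> hj'k hj'j; apply: eq_big_nat => m /andP[_ hm].
by rewrite /lQz /lQw !(@LQblock_upd th j m.+1) ?(@LQblock_upd th k.+1 m.+1) //; lia.
Qed.

Definition coordQ_head th j p : R :=
  let k := ((p - 1) %/ 4)%N in
  match ((p - 1) %% 4)%N with
  | 0 => complex.Re (lQ_dotz th j k.+1 k)
  | 1 => complex.Im (lQ_dotz th j k.+1 k)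
  | 2 => complex.Re (lQ_dotw th j k.+1 k)
  | _ => complex.Im (lQ_dotw th j k.+1 k)
  end%N.

Lemma coordQ_split N th j p : (j, p) \in angle_idx 4 N ->
  coordQ N th j p = coordQ_head th j p +
    sin_prod th ((p - 1) %/ 4).+1 (4 * ((p - 1) %/ 4)) * sph_coord th j p.
Proof.
rewrite mem_angle_idx => /andP[hj hp].
have [hk _] := angle_block_bounds (isT : (0 < 4)%N) hp.
have p_gt0 : (0 < p)%N by case/andP: hp.
rewrite /coordQ /coordQ_head /=.
move: hk (pred_divn_eq 4 p_gt0) (ltn_pmod (p - 1) (isT : (0 < 4)%N)).
move: ((p - 1) %/ 4)%N ((p - 1) %% 4)%N => k r hk -> hr.
rewrite rhoQzE ?rhoQwE; [|lia..].
rewrite lQ_dotz_split; last lia.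
rewrite lQ_dotw_split; last lia.
rewrite lQz_lower ?lQw_lower ?complex_mulr_real; [|lia..].
by case: r hr => [|[|[|[|//]]]] _; rewrite /= ?ReD ?ImD /= mulrC ?addn1 ?addn2 ?addn3 ?addn4.
Qed.

Lemma det_jacobian_coordQ N th :
  (forall j p, (2 <= j <= N)%N -> (1 <= p <= 4 * (j - 1))%N -> 0 < th j p < pi) ->
  `|\det (angle_jacobian (angle_idx 4 N) (coordQ N) th)| =
  \prod_(2 <= j < N.+1) \prod_(1 <= p < (4 * j - 4).+1) sin (th j p) ^+ (4 * N - p - 3).
Proof.
move=> th_range; rewrite (det_angle_jacobian_sph (G := @coordQ_head)) //.
- by apply: eq_big_nat => j hj; rewrite (_ : 4 * j - 4 = 4 * (j - 1))%N //; lia.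
- exact: coordQ_split.
- by move=> th' j p j' p' t _ hj'k hj'j; rewrite /coordQ_head lQ_dotz_upd ?lQ_dotw_upd.
- by move=> j p; rewrite mem_angle_idx => /andP[]; exact: th_range.
Qed.

End QuaternionCase.

Theorem mainTheorem4 (R : realType) (N : nat) (hN : (2 <= N)%N) :
  (forall th : angles R,
     (forall j p, (2 <= j <= N)%N -> (1 <= p <= 2 * (j - 1))%N ->
        0 < th j p < pi) ->
     `|\det (angle_jacobian (angle_idx 2 N) (coordC N) th)| =
       \prod_(2 <= j < N.+1) \prod_(1 <= p < (2 * j - 2).+1)
          sin (th j p) ^+ (2 * N - p - 1)) /\
  (forall th : angles R,
     (forall j p, (2 <= j <= N)%N -> (1 <= p <= 4 * (j - 1))%N ->
        0 < th j p < pi) ->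
     `|\det (angle_jacobian (angle_idx 4 N) (coordQ N) th)| =
       \prod_(2 <= j < N.+1) \prod_(1 <= p < (4 * j - 4).+1)
          sin (th j p) ^+ (4 * N - p - 3)).
Proof.
by split=> th; [exact: det_jacobian_coordC | exact: det_jacobian_coordQ].
Qed.
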